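(* For $j\in\mathbb{Z}$ let $R_j(t,u)$ be the generating function of labelled plane trees, where $t$ counts edges and $u$ counts nodes with label at least $j$. The family $R_0,R_1,R_2,\dots$ is completely determined by the equations $$R_j=1+tR_j(R_{j-1}+R_{j+1})\quad(j\ge1),\qquad R_0(t,u)=uR_1(tu,1/u).$$ More generally, for all $j\in\mathbb{Z}$, $R_{-j}(t,u)=uR_{j+1}(tu,1/u)$.
   Context: A labelled plane tree is a rooted plane tree whose nodes carry integer labels, with the root labelled $0$ and labels of adjacent nodes differing by $+1$ or $-1$. Generating functions are formal power series in $t$ with coefficients polynomial in $u$. *)

From HB Require Import structures.
From mathcomp Require Import all_boot all_order all_algebra.
From Stdlib Require List.
Set Implicit Arguments. Unset Strict Implicit. Unset Printing Implicit Defensive.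
Import Order.TTheory GRing.Theory Num.Theory.
Local Open Scope ring_scope.

Inductive ltree : Type := LNode : int -> seq ltree -> ltree.

Definition label (T : ltree) : int := let: LNode m _ := T in m.

Fixpoint labels_ok (T : ltree) : bool :=
  let: LNode m ts := T in
  all (fun c => (label c == m + 1) || (label c == m - 1)) ts && all labels_ok ts.

Definition labelled_tree (T : ltree) : bool := (label T == 0) && labels_ok T.

Fixpoint edges (T : ltree) : nat :=
  let: LNode _ ts := T in (size ts + sumn (map edges ts))%N.

Fixpoint count_ge (j : int) (T : ltree) : nat :=
  let: LNode m ts := T in (((j <= m)%R : nat) + sumn (map (count_ge j) ts))%N.

(* Formal power series in t with coefficients polynomials in u:
   F : nat -> {poly rat}, F n = coefficient of t^n (a polynomial in u = 'X). *)
Definition series := nat -> {poly rat}.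

Definition sone : series := fun n => (n == 0%N)%:R.
Definition sadd (F G : series) : series := fun n => F n + G n.
Definition smul (F G : series) : series :=
  fun n => \sum_(i < n.+1) F i * G (n - i)%N.
Definition st (F : series) : series :=
  fun n => if n is m.+1 then F m else 0.

Definition is_gf_R (j : int) (F : series) : Prop :=
  forall n : nat, exists s : seq ltree,
    List.NoDup s /\
    (forall T, List.In T s <-> (labelled_tree T /\ edges T = n)) /\
    F n = \sum_(T <- s) 'X^(count_ge j T).

(* F(t,u) = u * G(t u, 1/u), coefficientwise: the coefficient of t^n of the
   right side is u^(n+1) * G_n(1/u); identity of rational functions in u,
   checked at every nonzero rational u. *)
Definition subst_rel (F G : series) : Prop :=
  forall (n : nat) (x : rat), x != 0 ->
    (F n).[x] = x ^+ n.+1 * (G n).[x^-1].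

(* A labelled tree with at least one edge splits uniquely into its first subtree, which becomes
   a labelled tree once its labels are shifted by +1 or -1, and the rest of the tree; weighting
   trees by u^(number of nodes labelled at least j), this decomposition is the recurrence
   R_j = u^[j <= 0] + t R_j (R_(j-1) + R_(j+1)).  Negating all labels is an involution on
   labelled trees preserving the number of edges, and a node counts in R_(-j) for the negated
   tree exactly when it does not count in R_(j+1) for the original one; as a tree with n edges
   has n+1 nodes, this gives R_(-j)(t,u) = u R_(j+1)(tu,1/u).  Uniqueness goes by induction on the
   power of t: for j >= 1 the coefficient of t^n in R_j involves only lower coefficients, and that
   of R_0 is a polynomial in u determined, through its values at all u <> 0, by that of R_1. *)

From HB Require Import structures.
From mathcomp Require Import all_boot all_order all_algebra.
From Stdlib Require List.
From Stdlib Require Import IndefiniteDescription.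
Import Order.TTheory GRing.Theory Num.Theory.
Local Open Scope ring_scope.

Set Implicit Arguments. Unset Strict Implicit. Unset Printing Implicit Defensive.

Fixpoint ltree_Forall_ind (P : ltree -> Prop)
    (IH : forall m ts, List.Forall P ts -> P (LNode m ts)) (T : ltree) : P T :=
  let: LNode m ts := T in
  IH m ts ((fix all_subtrees (ts : seq ltree) : List.Forall P ts :=
              if ts is t :: ts' then List.Forall_cons t (ltree_Forall_ind IH t) (all_subtrees ts')
              else List.Forall_nil P) ts).

Fixpoint ltree_eqb (a b : ltree) : bool :=
  let: LNode m ts := a in let: LNode m' ts' := b in
  (m == m') && all2 ltree_eqb ts ts'.

Lemma ltree_eqP : Equality.axiom ltree_eqb.
Proof.
move=> a b; apply: (iffP idP) => [|<-].
  elim/ltree_Forall_ind: a b => m ts IH [m' ts'] /= /andP[/eqP <-].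
  by elim: IH ts' => [|t ts1 Ht _ IHts] [|t' ts2] //= /andP[/Ht -> /IHts [->]].
elim/ltree_Forall_ind: a => m ts IH /=; rewrite eqxx.
by elim: IH => //= t ts' -> _.
Qed.

HB.instance Definition _ := hasDecEq.Build ltree ltree_eqP.

Lemma In_mem (T : eqType) (x : T) (s : seq T) : List.In x s <-> x \in s.
Proof.
elim: s => [|y s IH] //=; rewrite in_cons; split.
- by case=> [->|/IH ->]; rewrite ?eqxx ?orbT.
- by case/orP=> [/eqP ->|/IH]; [left|right].
Qed.

Lemma NoDup_uniq (T : eqType) (s : seq T) : List.NoDup s -> uniq s.
Proof. by elim=> //= x s' xNs _ ->; rewrite andbT; apply: contra_notN xNs => /In_mem. Qed.

Lemma ltree_ind (P : ltree -> Prop)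
    (IH : forall m ts, (forall t, t \in ts -> P t) -> P (LNode m ts)) (T : ltree) : P T.
Proof.
elim/ltree_Forall_ind: T => m ts /List.Forall_forall subP.
by apply: IH => t /In_mem /subP.
Qed.

Fixpoint shift (d : int) (T : ltree) : ltree :=
  let: LNode m ts := T in LNode (m + d) (map (shift d) ts).

Fixpoint oppt (T : ltree) : ltree :=
  let: LNode m ts := T in LNode (- m) (map oppt ts).

Definition graft (c r : ltree) : ltree :=
  let: LNode m ts := r in LNode m (c :: ts).

Lemma label_shift d T : label (shift d T) = label T + d.
Proof. by case: T. Qed.

Lemma shiftK d : cancel (shift d) (shift (- d)).
Proof. by elim/ltree_ind=> m ts IH /=; rewrite addrK -map_comp map_id_in. Qed.

Lemma shiftNK d : cancel (shift (- d)) (shift d).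
Proof. by move=> T; rewrite -{1}(opprK d) shiftK. Qed.

Lemma shift_inj d : injective (shift d).
Proof. exact: can_inj (shiftK d). Qed.

Lemma labels_ok_shift d T : labels_ok (shift d T) = labels_ok T.
Proof.
elim/ltree_ind: T => m ts IH /=; rewrite !all_map; congr andb.
  by apply: eq_all => c /=; rewrite label_shift !(addrAC _ d) !(inj_eq (addIr d)).
exact: eq_in_all.
Qed.

Lemma edges_shift d T : edges (shift d T) = edges T.
Proof.
elim/ltree_ind: T => m ts IH /=; rewrite size_map -map_comp.
by congr (_ + sumn _)%N; exact/eq_in_map.
Qed.

Lemma count_ge_shift j d T : count_ge j (shift d T) = count_ge (j - d) T.
Proof.
elim/ltree_ind: T => m ts IH /=; rewrite -map_comp lerBlDr.
by congr (_ + sumn _)%N; exact/eq_in_map.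
Qed.

Lemma label_oppt T : label (oppt T) = - label T.
Proof. by case: T. Qed.

Lemma opptK : involutive oppt.
Proof. by elim/ltree_ind=> m ts IH /=; rewrite opprK -map_comp map_id_in. Qed.

Lemma oppt_inj : injective oppt.
Proof. exact: inv_inj opptK. Qed.

Lemma labels_ok_oppt T : labels_ok (oppt T) = labels_ok T.
Proof.
elim/ltree_ind: T => m ts IH /=; rewrite !all_map; congr andb; last exact: eq_in_all.
apply: eq_all => c /=; rewrite label_oppt.
have -> : - m + 1 = - (m - 1) by rewrite opprB addrC.
by rewrite -opprD !eqr_opp orbC.
Qed.

Lemma edges_oppt T : edges (oppt T) = edges T.
Proof.
elim/ltree_ind: T => m ts IH /=; rewrite size_map -map_comp.
by congr (_ + sumn _)%N; exact/eq_in_map.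
Qed.

(* Every node is counted exactly once: [- j <= - m] iff not [j + 1 <= m]. *)
Lemma count_ge_oppt j T :
  (count_ge (- j) (oppt T) + count_ge (j + 1) T = (edges T).+1)%N.
Proof.
elim/ltree_ind: T => m ts IH /=.
have root_once : (((- j <= - m)%R : nat) + ((j + 1 <= m)%R : nat) = 1)%N.
  by rewrite lerN2 -ltzD1; case: lerP.
suff subtrees : (sumn (map (count_ge (- j)) (map oppt ts))
                 + sumn (map (count_ge (j + 1)) ts) = size ts + sumn (map edges ts))%N.
  by rewrite addnACA root_once subtrees.
elim: ts IH => //= t ts IHts IH.
rewrite addnACA IH ?mem_head // IHts => [|u u_ts]; last by rewrite IH // in_cons u_ts orbT.
by rewrite addSn addnCA.
Qed.

Lemma labelled_graft_shift d c r :
  (d == 1) || (d == -1) -> labelled_tree c -> labelled_tree r ->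
  labelled_tree (graft (shift d c) r).
Proof.
case: r => m ts d_unit /andP[/eqP c0 c_ok] /andP[/= /eqP-> /andP[ts_adj ts_ok]].
by rewrite /labelled_tree /= label_shift c0 add0r sub0r d_unit labels_ok_shift c_ok ts_adj ts_ok.
Qed.

Lemma edges_graft c r : edges (graft c r) = (edges c + edges r).+1.
Proof. by case: r => m ts /=; rewrite addSn addnCA. Qed.

Lemma count_ge_graft j c r : count_ge j (graft c r) = (count_ge j c + count_ge j r)%N.
Proof. by case: r => m ts /=; rewrite addnCA. Qed.

Lemma graft_inj c r c' r' : graft c r = graft c' r' -> c = c' /\ r = r'.
Proof. by case: r => m ts; case: r' => m' ts' [-> -> ->]. Qed.

Definition first_child_label (T : ltree) : int :=
  if T is LNode _ (c :: _) then label c else 0.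

Lemma first_child_label_graft c r : first_child_label (graft c r) = label c.
Proof. by case: r. Qed.

Definition tree_enumeration (s : nat -> seq ltree) : Prop :=
  forall n, uniq (s n) /\ forall T, (T \in s n) = labelled_tree T && (edges T == n).

Definition weight (s : nat -> seq ltree) (j : int) (n : nat) : {poly rat} :=
  \sum_(T <- s n) 'X^(count_ge j T).

Section Enumeration.

Variable s : nat -> seq ltree.
Hypothesis s_enum : tree_enumeration s.

Lemma enum_uniq n : uniq (s n).
Proof. by case: (s_enum n). Qed.

Lemma mem_enum n T : (T \in s n) = labelled_tree T && (edges T == n).
Proof. by case: (s_enum n). Qed.

Lemma mem_enumP n T : T \in s n -> [/\ label T = 0, labels_ok T & edges T = n].
Proof. by rewrite mem_enum => /andP[/andP[/eqP -> ->] /eqP ->]. Qed.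

Lemma perm_enum (s' : seq ltree) n :
  uniq s' -> (forall T, (T \in s') = labelled_tree T && (edges T == n)) ->
  perm_eq (s n) s'.
Proof.
by move=> s'_uniq s'E; apply: uniq_perm (enum_uniq n) s'_uniq _ => T; rewrite s'E mem_enum.
Qed.

(* [r] is a tree deprived of its first subtree, [c] that subtree relabelled to have root 0. *)
Definition splits (m : nat) : seq (ltree * ltree) :=
  [seq rc | i <- iota 0 m.+1, rc <- [seq (r, c) | r <- s i, c <- s (m - i)]].

Definition grafts (m : nat) (d : int) : seq ltree :=
  [seq graft (shift d rc.2) rc.1 | rc <- splits m].

Lemma mem_splits m r c :
  ((r, c) \in splits m) = [&& labelled_tree r, labelled_tree c & edges c + edges r == m]%N.
Proof.
apply/idP/and3P => [|[r_ok c_ok /eqP cr_m]].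
  case/allpairsPdep=> i [_ [i_le /allpairsP[[r' c'] /= [r_i c_i ->]] [-> ->]]].
  rewrite !mem_enum in r_i c_i; case/andP: r_i => -> /eqP->; case/andP: c_i => -> /eqP->.
  by rewrite subnK // -ltnS; rewrite mem_iota in i_le.
apply/allpairsPdep; exists (edges r), (r, c); split=> //.
  by rewrite mem_iota add0n ltnS -cr_m leq_addl.
by apply/allpairsP; exists (r, c); rewrite !mem_enum r_ok c_ok -cr_m addnK !eqxx.
Qed.

Lemma splits_uniq m : uniq (splits m).
Proof.
apply: allpairs_uniq_dep => [|i _|]; first exact: iota_uniq.
  by apply: allpairs_uniq; rewrite ?enum_uniq // => -[? ?] [? ?] _ _ [-> ->].
move=> p p' /allpairsPdep[i [rc [_ rc_i ->]]] /allpairsPdep[i' [rc' [_ rc_i' ->]]] /= rcE.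
case/allpairsP: rc_i rcE => -[r c] [/mem_enumP[_ _ <-] _ ->] /= rcE.
by case/allpairsP: rc_i' rcE => -[_ _] [/mem_enumP[_ _ <-] _ ->] [<- <-].
Qed.

Lemma grafts_uniq m d : uniq (grafts m d).
Proof.
by rewrite map_inj_uniq ?splits_uniq // => -[r c] [r' c'] /graft_inj /= [/shift_inj-> ->].
Qed.

Lemma first_child_label_grafts m d T : T \in grafts m d -> first_child_label T = d.
Proof.
case/mapP=> -[r c] /=; rewrite mem_splits => /and3P[_ c_ok _] ->.
by case/andP: c_ok => /eqP c0 _; rewrite first_child_label_graft label_shift c0 add0r.
Qed.

Lemma labelled_grafts m d T : T \in grafts m d -> (d == 1) || (d == -1) ->
  labelled_tree T && (edges T == m.+1).
Proof.
case/mapP=> -[r c]; rewrite mem_splits => /and3P[r_ok c_ok /eqP cr_m] -> d_unit.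
by rewrite labelled_graft_shift //= edges_graft edges_shift cr_m.
Qed.

Lemma mem_grafts m T : labelled_tree T -> edges T = m.+1 ->
  T \in grafts m 1 ++ grafts m (-1).
Proof.
case: T => l [|c ts] T_ok //.
case/andP: T_ok => /= /eqP-> /andP[/andP[c_adj ts_adj] /andP[c_ok ts_ok]].
rewrite addSn addnCA => -[cr_m].
set r := LNode 0 ts; set d := label c.
have -> : LNode 0 (c :: ts) = graft (shift d (shift (- d) c)) r by rewrite shiftNK.
have rc_split : (r, shift (- d) c) \in splits m.
  rewrite mem_splits edges_shift cr_m eqxx andbT.
  by rewrite /labelled_tree /= ts_adj ts_ok label_shift subrr labels_ok_shift c_ok.
rewrite add0r sub0r -/d in c_adj; rewrite mem_cat.
by case/orP: c_adj => /eqP d1; rewrite d1 in rc_split *; rewrite (map_f _ rc_split) ?orbT.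
Qed.

Lemma perm_enum_succ m : perm_eq (s m.+1) (grafts m 1 ++ grafts m (-1)).
Proof.
apply: perm_enum => [|T].
  rewrite cat_uniq !grafts_uniq andbT /=; apply/hasPn => T /first_child_label_grafts T1.
  by apply: contraL isT => /first_child_label_grafts; rewrite T1.
apply/idP/idP => [|/andP[T_ok /eqP T_m]]; last exact: mem_grafts.
by rewrite mem_cat => /orP[] /labelled_grafts; apply.
Qed.

Lemma weight_succ j m :
  weight s j m.+1 =
  \sum_(i < m.+1) weight s j i * (weight s (j - 1) (m - i) + weight s (j + 1) (m - i)).
Proof.
rewrite /weight (perm_big _ (perm_enum_succ m)) big_cat !big_map /splits.
have -> : iota 0 m.+1 = index_iota 0 m.+1 by rewrite /index_iota subn0.
rewrite !big_allpairs_dep !big_mkord.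
under [RHS]eq_bigr do rewrite mulrDr.
rewrite big_split /=; congr (_ + _); apply: eq_bigr => i _;
  rewrite big_allpairs_dep mulr_suml; apply: eq_bigr => r _;
  rewrite mulr_sumr; apply: eq_bigr => c _ /=.
all: by rewrite count_ge_graft count_ge_shift exprD mulrC.
Qed.

Lemma weight0 j : weight s j 0 = 'X^((j <= 0)%R : nat).
Proof.
have leaf : perm_eq (s 0) [:: LNode 0 [::]].
  apply: perm_enum => // -[m [|c ts]]; rewrite mem_seq1; apply/eqP/andP => //.
  - by case=> ->.
  - by case=> /andP[/eqP /= -> _].
  - by case.
by rewrite /weight (perm_big _ leaf) big_seq1 /= addn0.
Qed.

Lemma horner_weight_opp j n (x : rat) : x != 0 ->
  (weight s (- j) n).[x] = x ^+ n.+1 * (weight s (j + 1) n).[x^-1].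
Proof.
move=> x_neq0.
have oppt_enum : perm_eq (s n) (map oppt (s n)).
  apply: perm_enum => [|T]; first by rewrite (map_inj_uniq oppt_inj) enum_uniq.
  rewrite -{1}[T]opptK (mem_map oppt_inj) mem_enum.
  by rewrite /labelled_tree label_oppt oppr_eq0 labels_ok_oppt edges_oppt.
rewrite /weight (perm_big _ oppt_enum) big_map !horner_sum mulr_sumr.
apply: eq_big_seq => T /mem_enumP[_ _ <-].
rewrite !hornerXn -(count_ge_oppt j T) exprD exprVn mulfK //.
exact: expf_neq0.
Qed.

End Enumeration.

Lemma eq_poly_horner_nz (R : numDomainType) (p q : {poly R}) :
  (forall x, x != 0 -> p.[x] = q.[x]) -> p = q.
Proof.
move=> pq; apply/eqP; rewrite -subr_eq0; apply/eqP.
apply: (@roots_geq_poly_eq0 _ _ [seq i.+1%:R | i <- iota 0 (size (p - q))]).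
- by apply/allP => _ /mapP[i _ ->]; rewrite /root hornerD hornerN pq ?subrr ?pnatr_eq0.
- by rewrite map_inj_uniq ?iota_uniq // => i i' /eqP; rewrite eqr_nat => /eqP[].
- by rewrite size_map size_iota.
Qed.

Lemma tree_enumeration_of_gf (R : int -> series) :
  (forall j, is_gf_R j (R j)) ->
  exists s, tree_enumeration s /\ forall j n, R j n = weight s j n.
Proof.
move=> hR.
have mem_listed n (s' : seq ltree) :
    (forall T, List.In T s' <-> labelled_tree T /\ edges T = n) ->
    forall T, (T \in s') = labelled_tree T && (edges T == n).
  move=> s'P T; apply/idP/andP => [/In_mem/s'P[-> ->] // | [T_ok /eqP T_n]].
  exact/In_mem/s'P.
have listing n :
    {s' | List.NoDup s' /\ forall T, List.In T s' <-> labelled_tree T /\ edges T = n}.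
  apply: constructive_indefinite_description.
  by have [s' [? [? _]]] := hR 0 n; exists s'.
pose s n := sval (listing n).
have s_enum : tree_enumeration s.
  move=> n; rewrite /s; case: (listing n) => s' [/NoDup_uniq s'_uniq s'P] /=.
  by split=> //; apply: mem_listed.
exists s; split=> // j n; have [s' [/NoDup_uniq s'_uniq [/mem_listed s'E ->]]] := hR j n.
by rewrite /weight (perm_big _ (perm_enum s_enum s'_uniq s'E)).
Qed.

Definition satisfies_recurrence (S : nat -> series) : Prop :=
  forall j : nat, (1 <= j)%N -> forall n : nat,
    S j n = sadd sone (st (smul (S j) (sadd (S j.-1) (S j.+1)))) n.

Lemma recurrence_unique (S S' : nat -> series) :
  satisfies_recurrence S -> subst_rel (S 0%N) (S 1%N) ->
  satisfies_recurrence S' -> subst_rel (S' 0%N) (S' 1%N) ->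
  forall j n, S j n = S' j n.
Proof.
move=> S_rec S_sub S'_rec S'_sub j n; elim/ltn_ind: n j => n IH.
have pos j : (1 <= j)%N -> S j n = S' j n.
  move=> j_ge1; rewrite S_rec // S'_rec //; case: n IH => [|m] IH //.
  rewrite /sadd /sone /st /smul /=; congr (_ + _); apply: eq_bigr => i _.
  by rewrite !IH // ltnS leq_subr.
case=> [|j]; last exact: pos.
apply: eq_poly_horner_nz => x x_neq0.
by rewrite S_sub // S'_sub // pos.
Qed.

Theorem lemma6 (R : int -> series) (hR : forall j : int, is_gf_R j (R j)) :
  (* R_0, R_1, ... satisfy the equations *)
  ((forall j : nat, (1 <= j)%N -> forall n : nat,
      R j n = sadd sone (st (smul (R j) (sadd (R (j%:Z - 1)) (R (j%:Z + 1))))) n)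
   /\ subst_rel (R 0) (R 1))
  (* ... and they determine the family completely *)
  /\ (forall S : nat -> series,
        (forall j : nat, (1 <= j)%N -> forall n : nat,
           S j n = sadd sone (st (smul (S j) (sadd (S j.-1) (S j.+1)))) n) ->
        subst_rel (S 0%N) (S 1%N) ->
        forall (j n : nat), S j n = R j n)
  (* general symmetry *)
  /\ (forall j : int, subst_rel (R (- j)) (R (j + 1))).
Proof.
have [s [s_enum Rs]] := tree_enumeration_of_gf hR.
have sym (j : int) : subst_rel (R (- j)) (R (j + 1)).
  by move=> n x x_neq0; rewrite !Rs (horner_weight_opp s_enum).
have sym0 : subst_rel (R 0) (R 1) by have := sym 0; rewrite oppr0 add0r.
have rec (j : nat) : (1 <= j)%N -> forall n,
    R j n = sadd sone (st (smul (R j) (sadd (R (j%:Z - 1)) (R (j%:Z + 1))))) n.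
  move=> j_ge1 [|m]; rewrite /sadd /sone /st /smul /= !Rs.
    by rewrite (weight0 s_enum); case: j j_ge1 => // j _; rewrite expr0 [_ + 0]addr0.
  by rewrite add0r (weight_succ s_enum); apply: eq_bigr => i _; rewrite !Rs.
have R_rec : satisfies_recurrence (fun j : nat => R j).
  by move=> j j_ge1 n /=; rewrite predn_int // -addn1 PoszD; exact: rec.
split; [by split | split; last exact: sym].
by move=> S S_rec S_sub; exact: recurrence_unique S_rec S_sub R_rec sym0.
Qed.
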